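(* For every reduction $S$ in a TRS the following equivalences hold: (i) $S$ starting in $s$ is weakly $p$-continuous and total iff $S$ starting in $s$ is weakly $m$-continuous; and (ii) $S$ weakly $p$-converges from $s$ to $t$ and is total iff $S$ weakly $m$-converges from $s$ to $t$.
   Context: A TRS $\mathcal{R}=(\Sigma,R)$ has rules $l\to r$ over possibly infinite terms. Total terms are the (possibly infinite) terms over $\Sigma$ and variables; partial terms are terms over $\Sigma_\bot=\Sigma\uplus\{\bot\}$. The order $s\le_\bot t$ holds iff $s$ is obtained from $t$ by replacing some subterm occurrences by $\bot$; partial terms with $\le_\bot$ form a complete semilattice. For a non-empty sequence $(a_\iota)_{\iota<\alpha}$ its limit inferior is $\liminf_{\iota\to\alpha}a_\iota=\bigvee_{\beta<\alpha}\bigwedge_{\beta\le\iota<\alpha}a_\iota$ (least upper bound over $\beta$ of greatest lower bounds of the tails). On total terms, $d(s,t)=2^{-k}$ with $k$ the minimal depth at which $s,t$ differ ($d(s,s)=0$); this is a complete ultrametric. A reduction is a transfinite sequence of steps $S=(t_\iota\to_{\pi_\iota}t_{\iota+1})_{\iota<\alpha}$ (for partial terms, in $(\Sigma_\bot,R)$). $S$ is weakly $p$-continuous if $\liminf_{\iota\to\lambda}t_\iota=t_\lambda$ for every limit $\lambda<\alpha$, and weakly $p$-converges to $t$ if it is weakly $p$-continuous and $t=\liminf_{\iota\to\hat\alpha}t_\iota$ (with $\hat\alpha=\alpha+1$ if $S$ is closed, $\alpha$ if open, so for closed $S$, $t$ is its last term). Weak $m$-continuity/convergence are defined identically with the metric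 limit $\lim$ in place of $\liminf$ (and total terms). ''Total'' means all terms of $S$ (and the final term $t$) are total. *)

From Stdlib Require Import Reals List Arith.
Import ListNotations.
Open Scope R_scope.
Set Implicit Arguments.

Inductive sym (F V : Type) : Type :=
| Fun : F -> sym F V
| Var : V -> sym F V
| Bot : sym F V.
Arguments Fun {F V} _.
Arguments Var {F V} _.
Arguments Bot {F V}.

(* A (possibly infinite) term is given by its labelling of positions
   (positions = lists of child indices, root = []); None = not a position. *)
Definition term (F V : Type) := list nat -> option (sym F V).

Section Terms.
Variables (F V : Type) (ar : F -> nat).

Definition arity_sym (s : sym F V) : nat :=
  match s with Fun f => ar f | _ => 0 end.

Definition wf (t : term F V) : Prop :=
  t [] <> None /\
  forall p i, t (p ++ [i]) <> None <-> exists s, t p = Some s /\ (i < arity_sym s)%nat.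

Definition total (t : term F V) : Prop := forall p, t p <> Some Bot.

Definition le_bot (s t : term F V) : Prop :=
  forall p, s p <> None -> s p = t p \/ (s p = Some Bot /\ t p <> None).

Definition is_glb (A : term F V -> Prop) (g : term F V) : Prop :=
  wf g /\ (forall u, A u -> le_bot g u) /\
  (forall h, wf h -> (forall u, A u -> le_bot h u) -> le_bot h g).

Definition is_lub (A : term F V -> Prop) (g : term F V) : Prop :=
  wf g /\ (forall u, A u -> le_bot u g) /\
  (forall h, wf h -> (forall u, A u -> le_bot u h) -> le_bot g h).

Definition differ_at_depth (s t : term F V) (k : nat) : Prop :=
  exists p, length p = k /\ s p <> t p.

Definition dist (s t : term F V) (r : R) : Prop :=
  ((forall p, s p = t p) /\ r = 0) \/
  (exists k, differ_at_depth s t k /\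
             (forall j, (j < k)%nat -> ~ differ_at_depth s t j) /\
             r = (/ 2) ^ k).

(* instance l sigma, read at position q ++ p of l *)
Fixpoint inst_aux (l : term F V) (sigma : V -> term F V) (q p : list nat)
  : option (sym F V) :=
  match l q with
  | Some (Var x) => sigma x p
  | Some s => match p with
              | [] => Some s
              | i :: p' => inst_aux l sigma (q ++ [i]) p'
              end
  | None => None
  end.

Definition inst (l : term F V) (sigma : V -> term F V) : term F V :=
  fun p => inst_aux l sigma [] p.

Fixpoint strip (pi p : list nat) : option (list nat) :=
  match pi, p with
  | [], _ => Some p
  | i :: pi', j :: p' => if Nat.eqb i j then strip pi' p' else None
  | _ :: _, [] => None
  end.

Definition replace (t : term F V) (pi : list nat) (u : term F V) : term F V :=
  fun p => match strip pi p with Some q => u q | None => t p end.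

Definition is_trs (Rules : term F V * term F V -> Prop) : Prop :=
  forall l r, Rules (l, r) ->
    wf l /\ total l /\ wf r /\ total r /\
    (exists f, l [] = Some (Fun f)) /\
    (forall p x, r p = Some (Var x) -> exists q, l q = Some (Var x)).

Definition step (Rules : term F V * term F V -> Prop)
    (t : term F V) (pi : list nat) (t' : term F V) : Prop :=
  t pi <> None /\
  exists l r (sigma : V -> term F V),
    Rules (l, r) /\ (forall x, wf (sigma x)) /\
    (forall p, t (pi ++ p) = inst l sigma p) /\
    (forall p, t' p = replace t pi (inst r sigma) p).

End Terms.

Record wordinal := {
  ord :> Type;
  olt : ord -> ord -> Prop;
  olt_wf : well_founded olt;
  olt_trans : forall a b c, olt a b -> olt b c -> olt a c;
  olt_irrefl : forall a, ~ olt a a;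
  olt_total : forall a b, olt a b \/ a = b \/ olt b a
}.
Arguments olt {w} _ _.

Section Reductions.
Variables (F V : Type) (ar : F -> nat).
Context {W : wordinal}.

Definition ole (a b : W) : Prop := olt a b \/ a = b.
Definition is_zero (a : W) : Prop := forall b, ~ olt b a.
Definition succ_of (b a : W) : Prop :=          (* a = b + 1 *)
  olt b a /\ forall c, olt b c -> ole a c.
Definition is_limit (l : W) : Prop :=
  (exists b, olt b l) /\ forall b, olt b l -> exists c, olt b c /\ olt c l.

(* a reduction of length alpha is closed iff alpha is zero or a successor *)
Definition closed (alpha : W) : Prop := is_zero alpha \/ exists b, succ_of b alpha.

(* iota < alpha-hat, where alpha-hat = alpha+1 if closed, alpha otherwise *)
Definition below_hat (alpha iota : W) : Prop :=
  olt iota alpha \/ (closed alpha /\ iota = alpha).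

Definition is_liminf (P : W -> Prop) (T : W -> term F V) (u : term F V) : Prop :=
  is_lub ar (fun g => exists beta, P beta /\
                 is_glb ar (fun v => exists iota, P iota /\ ole beta iota /\ v = T iota) g)
         u.

Definition is_mlim (P : W -> Prop) (T : W -> term F V) (u : term F V) : Prop :=
  forall eps, 0 < eps -> exists beta, P beta /\
    forall iota, P iota -> ole beta iota -> forall r, dist (T iota) u r -> r < eps.

Definition is_reduction (Rules : term F V * term F V -> Prop)
    (alpha : W) (T : W -> term F V) (pos : W -> list nat) : Prop :=
  (forall iota, below_hat alpha iota -> wf ar (T iota)) /\
  (forall iota iota', olt iota alpha -> succ_of iota iota' ->
       step ar Rules (T iota) (pos iota) (T iota')).

Definition starts_in (T : W -> term F V) (s : term F V) : Prop :=
  forall z, is_zero z -> T z = s.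

Definition red_total (alpha : W) (T : W -> term F V) : Prop :=
  forall iota, below_hat alpha iota -> total (T iota).

Definition weakly_p_continuous (alpha : W) (T : W -> term F V) : Prop :=
  forall l, olt l alpha -> is_limit l -> is_liminf (fun iota => olt iota l) T (T l).

Definition weakly_p_converges (alpha : W) (T : W -> term F V) (t : term F V) : Prop :=
  weakly_p_continuous alpha T /\ is_liminf (below_hat alpha) T t.

(* metric notions live on total terms *)
Definition weakly_m_continuous (alpha : W) (T : W -> term F V) : Prop :=
  red_total alpha T /\
  forall l, olt l alpha -> is_limit l -> is_mlim (fun iota => olt iota l) T (T l).

Definition weakly_m_converges (alpha : W) (T : W -> term F V) (t : term F V) : Prop :=
  weakly_m_continuous alpha T /\ total t /\ is_mlim (below_hat alpha) T t.

End Reductions.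

(* Both sides of the equivalences only concern the sequence of terms, and they reduce to a
   statement about a single limit: a total term u is the liminf of a sequence iff
   it is its metric limit, and both say that every position of u eventually
   carries the symbol of u.
   If u is the liminf and some position p of u did not stabilise, no glb of a
   tail could agree with u at p, so u with its subterm at p replaced by Bot
   would still bound all these glbs, and leastness would force u p = Bot.
   Conversely, if the terms agree with u up to depth |p| from beta on, the glb
   of the tail from beta copies u at p, so u is below every upper bound of the
   tail glbs, and above them since each glb is below the late terms.
   Finally a well-formed term has finitely many positions up to a given depth,
   so stabilisation of every position is metric convergence. *)

From Pilot Require Import Defs.
From Stdlib Require Import Reals List Arith Lia Lra Classical ClassicalEpsilon.
Import ListNotations.
Open Scope R_scope.

Lemma half_pow_le k m : (k <= m)%nat -> (/2)^m <= (/2)^k.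
Proof.
  intros H. induction H; [lra|]. simpl.
  assert (0 <= (/2)^m) by (apply pow_le; lra). lra.
Qed.

Lemma half_pow_lt_eventually eps : 0 < eps -> exists k, (/2)^k < eps.
Proof.
  intros He. destruct (pow_lt_1_zero (/2)) with (y := eps) as [N HN];
    [rewrite Rabs_right; lra|exact He|].
  exists N. specialize (HN N (le_n _)).
  rewrite Rabs_right in HN; [exact HN|apply Rle_ge, pow_le; lra].
Qed.

Section Eventually.
Context {W : wordinal}.

Lemma ole_refl (a : W) : ole a a.
Proof. right. reflexivity. Qed.

Lemma ole_trans (a b c : W) : ole a b -> ole b c -> ole a c.
Proof. intros [H1| ->] [H2| ->]; unfold ole; eauto using olt_trans. Qed.

Lemma ole_total (a b : W) : ole a b \/ ole b a.
Proof. destruct (olt_total _ a b) as [H|[H|H]]; unfold ole; auto. Qed.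

Variable P : W -> Prop.

Definition eventually (Q : W -> Prop) : Prop :=
  exists beta, P beta /\ forall iota, P iota -> ole beta iota -> Q iota.

Lemma eventually_beyond beta Q :
  P beta -> eventually Q -> exists iota, P iota /\ ole beta iota /\ Q iota.
Proof.
  intros Hb [b' [Hb' HQ]]. destruct (ole_total beta b') as [Ho|Ho].
  - exists b'. eauto using ole_refl.
  - exists beta. eauto using ole_refl.
Qed.

Lemma eventually_forall_in {A : Type} (L : list A) (Q : A -> W -> Prop) :
  (exists b, P b) -> (forall a, In a L -> eventually (Q a)) ->
  eventually (fun iota => forall a, In a L -> Q a iota).
Proof.
  intros [b0 Hb0]. induction L as [|a L IH]; intros H.
  - exists b0. split; [exact Hb0|]. intros ? _ _ _ [].
  - destruct IH as [b1 [Hb1 H1]]; [intros; apply H; right; assumption|].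
    destruct (H a (or_introl eq_refl)) as [b2 [Hb2 H2]].
    destruct (ole_total b1 b2) as [Ho|Ho];
      [exists b2|exists b1]; split; try assumption;
      intros iota Hi Hle c [<-|Hc]; eauto using ole_trans.
Qed.

End Eventually.

Section Terms.
Variables (F V : Type) (ar : F -> nat).

Lemma wf_child (t : term F V) p i :
  wf ar t -> t (p ++ [i]) <> None -> exists x, t p = Some x /\ (i < arity_sym ar x)%nat.
Proof. intros [_ Ht]. apply Ht. Qed.

Lemma wf_prefix (t : term F V) p q : wf ar t -> t (p ++ q) <> None -> t p <> None.
Proof.
  intros Ht. induction q as [|i q IH] using rev_ind; intros Hq.
  - rewrite app_nil_r in Hq. exact Hq.
  - rewrite app_assoc in Hq. destruct (wf_child _ _ _ Ht Hq) as [x [Hx _]].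
    apply IH. congruence.
Qed.

Lemma wf_strict_prefix_not_bot (t : term F V) p i r :
  wf ar t -> t (p ++ i :: r) <> None -> exists x, t p = Some x /\ x <> Bot.
Proof.
  intros Ht Hp.
  replace (p ++ i :: r) with ((p ++ [i]) ++ r) in Hp by (rewrite <- app_assoc; reflexivity).
  apply (wf_prefix _ _ _ Ht), (wf_child _ _ _ Ht) in Hp. destruct Hp as [x [Hx Hi]].
  exists x. split; [exact Hx|]. intros ->. simpl in Hi. lia.
Qed.

Definition eq_upto (n : nat) (s t : term F V) : Prop :=
  forall q, (length q <= n)%nat -> s q = t q.

Lemma wf_eq_upto (s t : term F V) n :
  wf ar s -> wf ar t ->
  (forall q, (length q <= n)%nat -> t q <> None -> s q = t q) -> eq_upto n s t.
Proof.
  intros Hs Ht Hpos q. induction q as [|i q IH] using rev_ind; intros Hq.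
  - apply Hpos; [exact Hq|apply Ht].
  - rewrite length_app in Hq. simpl in Hq.
    destruct (classic (t (q ++ [i]) = None)) as [E|E].
    2:{ apply Hpos; [rewrite length_app; simpl; lia|exact E]. }
    rewrite E. destruct (s (q ++ [i])) eqn:Es; [exfalso|reflexivity].
    destruct (wf_child s q i Hs) as [x [Hx Hi]]; [congruence|].
    rewrite IH in Hx by lia.
    assert (t (q ++ [i]) <> None) by (apply (proj2 Ht); eauto). contradiction.
Qed.

Lemma finite_positions (t : term F V) k :
  wf ar t -> exists L, forall p, (length p <= k)%nat -> t p <> None -> In p L.
Proof.
  intros Ht. induction k as [|k [L HL]].
  - exists [[]]. intros [|i p] Hp _; simpl in *; [auto|lia].
  - set (children p := map (fun i => p ++ [i])
                         (seq 0 (match t p with Some x => arity_sym ar x | None => 0%nat end))).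
    exists (L ++ flat_map children L). intros p Hp Hn. apply in_or_app.
    destruct (Nat.le_gt_cases (length p) k) as [Hl|Hl]; [left; auto|right].
    destruct p as [|i p _] using rev_ind; [simpl in Hl; lia|].
    rewrite length_app in Hl, Hp. simpl in Hl, Hp.
    destruct (wf_child t p i Ht Hn) as [x [Hx Hi]].
    apply in_flat_map. exists p. split.
    + apply HL; [lia|congruence].
    + unfold children. rewrite Hx. apply (in_map (fun j => p ++ [j])), in_seq. lia.
Qed.

Definition agree (A : term F V -> Prop) q : Prop :=
  forall a b, A a -> A b -> a q = b q.

Definition agree_below (A : term F V -> Prop) p : Prop :=
  forall q i r, p = q ++ i :: r -> agree A q.

Lemma agree_below_nil A : agree_below A [].
Proof. intros [|] ? ? ?; discriminate. Qed.

Lemma agree_below_snoc A p i : agree_below A (p ++ [i]) <-> agree_below A p /\ agree A p.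
Proof.
  split.
  - intros H. split.
    + intros q j r ->. apply (H q j (r ++ [i])). rewrite <- app_assoc. reflexivity.
    + apply (H p i []). reflexivity.
  - intros [Hb Ha] q j r Heq. destruct r as [|k r _] using rev_ind.
    + apply app_inj_tail in Heq. destruct Heq as [-> _]. exact Ha.
    + apply (Hb q j r). rewrite app_comm_cons, app_assoc in Heq.
      apply app_inj_tail in Heq. apply Heq.
Qed.

Section GlbConstruction.
Variables (A : term F V -> Prop) (a0 : term F V).
Hypotheses (A_a0 : A a0) (A_wf : forall a, A a -> wf ar a).

(* The positions of the glb are those below which all members carry a common
   symbol; it copies that symbol where they all agree and is Bot where they
   first disagree. *)
Definition glb_of : term F V := fun p =>
  if excluded_middle_informative (agree_below A p) then
    if excluded_middle_informative (agree A p) then a0 p else Some Bot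
  else None.

Lemma glb_of_agree p : agree_below A p -> agree A p -> glb_of p = a0 p.
Proof.
  intros Hb Ha. unfold glb_of.
  destruct (excluded_middle_informative (agree_below A p)); [|contradiction].
  destruct (excluded_middle_informative (agree A p)); [reflexivity|contradiction].
Qed.

Lemma disagree_position a p : agree_below A p -> ~ agree A p -> A a -> a p <> None.
Proof.
  intros Hb Hn Ha Hap. apply Hn. destruct p as [|i p _] using rev_ind.
  - destruct (A_wf a Ha) as [Hr _]. contradiction.
  - apply agree_below_snoc in Hb. destruct Hb as [_ Hag].
    (* all members share the symbol at p, hence the same children *)
    assert (Hnone : forall b, A b -> b (p ++ [i]) = None).
    { intros b Hb. destruct (b (p ++ [i])) eqn:E; [exfalso|reflexivity].
      destruct (wf_child b p i (A_wf b Hb)) as [x [Hx Hi]]; [congruence|].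
      rewrite (Hag b a Hb Ha) in Hx.
      assert (a (p ++ [i]) <> None) by (apply (proj2 (A_wf a Ha)); eauto).
      contradiction. }
    intros b c Hb Hc. rewrite (Hnone b Hb), (Hnone c Hc). reflexivity.
Qed.

Lemma glb_of_wf : wf ar glb_of.
Proof.
  unfold glb_of. split.
  - destruct (excluded_middle_informative (agree_below A [])) as [_|Hn];
      [|exfalso; apply Hn, agree_below_nil].
    destruct (excluded_middle_informative (agree A [])); [apply (A_wf a0 A_a0)|discriminate].
  - intros p i.
    destruct (excluded_middle_informative (agree_below A (p ++ [i]))) as [Hb|Hb].
    + pose proof Hb as [Hbp Hap]%agree_below_snoc.
      destruct (excluded_middle_informative (agree_below A p)) as [_|]; [|contradiction].
      destruct (excluded_middle_informative (agree A p)) as [_|]; [|contradiction].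
      rewrite <- (proj2 (A_wf a0 A_a0)).
      destruct (excluded_middle_informative (agree A (p ++ [i]))) as [_|Hn]; [reflexivity|].
      split; intros _; [|discriminate].
      apply (disagree_position a0 (p ++ [i]) Hb Hn A_a0).
    + split; [tauto|]. intros [x [Hx Hi]].
      destruct (excluded_middle_informative (agree_below A p)) as [Hbp|]; [|discriminate].
      destruct (excluded_middle_informative (agree A p)) as [Hap|].
      * exfalso. apply Hb, agree_below_snoc. auto.
      * injection Hx as <-. simpl in Hi. lia.
Qed.

Lemma glb_of_lower a : A a -> le_bot glb_of a.
Proof.
  intros Ha p Hp. unfold glb_of in *.
  destruct (excluded_middle_informative (agree_below A p)) as [Hb|]; [|contradiction].
  destruct (excluded_middle_informative (agree A p)) as [Hag|Hn].
  - left. apply Hag; assumption.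
  - right. split; [reflexivity|]. apply (disagree_position a p Hb Hn Ha).
Qed.

Lemma glb_of_greatest h : wf ar h -> (forall a, A a -> le_bot h a) -> le_bot h glb_of.
Proof.
  intros Hh Hlow p Hhp.
  assert (Hb : agree_below A p).
  { intros q i r ->. destruct (wf_strict_prefix_not_bot h q i r Hh Hhp) as [x [Hx Hxb]].
    assert (Hq : forall a, A a -> a q = h q).
    { intros a Ha. destruct (Hlow a Ha q) as [E|[E _]]; congruence. }
    intros a b Ha Hb'. rewrite (Hq a Ha), (Hq b Hb'). reflexivity. }
  unfold glb_of.
  destruct (excluded_middle_informative (agree_below A p)) as [_|]; [|contradiction].
  destruct (excluded_middle_informative (agree A p)) as [Hag|Hn].
  - exact (Hlow a0 A_a0 p Hhp).
  - destruct (h p) as [x|] eqn:Ex; [|contradiction].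
    destruct (classic (x = Bot)) as [->|Hx]; [left; reflexivity|].
    exfalso. apply Hn. intros a b Ha Hb'.
    destruct (Hlow a Ha p) as [Ea|[Ea _]], (Hlow b Hb' p) as [Eb|[Eb _]]; congruence.
Qed.

Lemma glb_of_is_glb : is_glb ar A glb_of.
Proof. split; [apply glb_of_wf|split; [apply glb_of_lower|apply glb_of_greatest]]. Qed.

End GlbConstruction.

Lemma strip_spec (p q r : list nat) : strip p q = Some r <-> q = p ++ r.
Proof.
  revert q. induction p as [|i p IH]; intros [|j q]; simpl.
  - split; congruence.
  - split; congruence.
  - split; discriminate.
  - destruct (Nat.eqb_spec i j) as [<-|Hij].
    + rewrite IH. split; [intros ->|injection 1]; auto.
    + split; [discriminate|injection 1; congruence].
Qed.

Definition bot_term : term F V := fun r => match r with [] => Some Bot | _ => None end.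

Lemma replace_bot_at (u : term F V) p : replace u p bot_term p = Some Bot.
Proof.
  unfold replace. rewrite (proj2 (strip_spec p p [])) by (rewrite app_nil_r; reflexivity).
  reflexivity.
Qed.

Lemma replace_bot_wf (u : term F V) p : wf ar u -> u p <> None -> wf ar (replace u p bot_term).
Proof.
  intros Hu Hp. unfold replace. split.
  - destruct (strip p []) as [r|] eqn:E; [|apply Hu].
    apply strip_spec in E. destruct p, r; discriminate.
  - intros q i. destruct (strip p (q ++ [i])) as [r|] eqn:E.
    + apply strip_spec in E. destruct r as [|j r _] using rev_ind.
      * rewrite app_nil_r in E. subst p.
        destruct (strip (q ++ [i]) q) as [r|] eqn:E.
        { apply strip_spec, (f_equal (@length nat)) in E.
          rewrite !length_app in E. simpl in E. lia. }
        simpl. split; [intros _|discriminate]. apply (proj2 Hu). exact Hp.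
      * rewrite app_assoc in E. apply app_inj_tail in E. destruct E as [-> ->].
        rewrite (proj2 (strip_spec p (p ++ r) r) eq_refl).
        split.
        { intros H. exfalso. apply H. destruct r; reflexivity. }
        intros [x [Hx Hj]]. destruct r; simpl in Hx; [|discriminate].
        injection Hx as <-. simpl in Hj. lia.
    + destruct (strip p q) as [r|] eqn:Eq; [|apply Hu].
      apply strip_spec in Eq. subst q. exfalso.
      assert (strip p ((p ++ r) ++ [i]) = Some (r ++ [i]))
        by (apply strip_spec; rewrite app_assoc; reflexivity).
      congruence.
Qed.

Lemma dist_exists (s t : term F V) : exists r, Defs.dist s t r.
Proof.
  destruct (classic (exists k, differ_at_depth s t k)) as [[k Hk]|H].
  - induction k as [k IH] using (well_founded_induction lt_wf).
    destruct (classic (exists j, (j < k)%nat /\ differ_at_depth s t j)) as [[j [Hj Hd]]|Hn].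
    + exact (IH j Hj Hd).
    + exists ((/2)^k). right. exists k. split; [exact Hk|split; [|reflexivity]].
      intros j Hj Hd. eauto.
  - exists 0. left. split; [|reflexivity]. intros p. apply NNPP. intros Hp.
    apply H. exists (length p), p. auto.
Qed.

Lemma dist_lt_eq_upto (s t : term F V) r n : Defs.dist s t r -> r < (/2)^n -> eq_upto n s t.
Proof.
  intros [[H _]|[k [Hk [Hmin ->]]]] Hr q Hq; [apply H|].
  apply NNPP. intros Hne.
  destruct (Nat.lt_ge_cases (length q) k) as [Hl|Hl].
  - apply (Hmin _ Hl). exists q. auto.
  - assert ((/2)^n <= (/2)^k) by (apply half_pow_le; lia). lra.
Qed.

Lemma eq_upto_dist_lt (s t : term F V) r n : Defs.dist s t r -> eq_upto n s t -> r < (/2)^n.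
Proof.
  intros [[_ ->]|[m [[p [Hp Hne]] [_ ->]]]] Hq; [apply pow_lt; lra|].
  assert (n < m)%nat by (destruct (Nat.le_gt_cases m n); [exfalso; apply Hne, Hq; lia|assumption]).
  assert ((/2)^m <= (/2)^(S n)) by (apply half_pow_le; lia).
  assert (0 < (/2)^n) by (apply pow_lt; lra).
  simpl in *. lra.
Qed.

Section Limits.
Context {W : wordinal}.
Variables (P : W -> Prop) (T : W -> term F V).
Hypothesis T_wf : forall iota, P iota -> wf ar (T iota).

Definition tail (beta : W) (v : term F V) : Prop :=
  exists iota, P iota /\ ole beta iota /\ v = T iota.

Lemma tail_at beta iota : P iota -> ole beta iota -> tail beta (T iota).
Proof. intros Hi Hle. exists iota. auto. Qed.

Lemma liminf_eventually_eq u p :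
  is_liminf ar P T u -> total u -> u p <> None -> eventually P (fun iota => T iota p = u p).
Proof.
  intros [Hwu [Hub Hleast]] Htot Hp. apply NNPP. intros Hnot.
  assert (Hglb : forall beta g, P beta -> is_glb ar (tail beta) g -> g p <> u p).
  { intros beta g Hb [_ [Hlow _]] E. apply Hnot. exists beta. split; [exact Hb|].
    intros iota Hi Hle.
    destruct (Hlow (T iota) (tail_at beta iota Hi Hle) p ltac:(congruence))
      as [E'|[E' _]]; [congruence|].
    exfalso. apply (Htot p). congruence. }
  (* otherwise cutting u at p would still bound every tail glb *)
  assert (Hcut : le_bot u (replace u p bot_term)).
  { apply Hleast; [apply replace_bot_wf; assumption|].
    intros g [beta [Hb Hg]] q Hq.
    pose proof (Hub g (ex_intro _ beta (conj Hb Hg)) q Hq) as Hgu.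
    unfold replace. destruct (strip p q) as [r|] eqn:E; [|exact Hgu].
    apply strip_spec in E. subst q. destruct r as [|i r].
    - rewrite app_nil_r in *. destruct Hgu as [E|[E _]]; [|left; exact E].
      exfalso. exact (Hglb beta g Hb Hg E).
    - exfalso. destruct (wf_strict_prefix_not_bot g p i r (proj1 Hg) Hq) as [x [Hx Hxb]].
      destruct (Hub g (ex_intro _ beta (conj Hb Hg)) p ltac:(congruence)) as [E|[E _]];
        [exact (Hglb beta g Hb Hg E)|congruence]. }
  destruct (Hcut p Hp) as [E|[E _]]; apply (Htot p); [rewrite replace_bot_at in E|]; exact E.
Qed.

Lemma mlim_iff_eventually_eq_upto u :
  is_mlim P T u <-> forall n, eventually P (fun iota => eq_upto n (T iota) u).
Proof.
  split.
  - intros Hm n. destruct (Hm ((/2)^n)) as [beta [Hb H]]; [apply pow_lt; lra|].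
    exists beta. split; [exact Hb|]. intros iota Hi Hle.
    destruct (dist_exists (T iota) u) as [r Hr].
    exact (dist_lt_eq_upto _ _ _ n Hr (H iota Hi Hle r Hr)).
  - intros H eps Heps. destruct (half_pow_lt_eventually eps Heps) as [k Hk].
    destruct (H k) as [beta [Hb Hbeta]]. exists beta. split; [exact Hb|].
    intros iota Hi Hle r Hr. pose proof (eq_upto_dist_lt _ _ _ _ Hr (Hbeta iota Hi Hle)). lra.
Qed.

Lemma liminf_mlim u : is_liminf ar P T u -> total u -> is_mlim P T u.
Proof.
  intros Hli Htot. pose proof (proj1 Hli) as Hwu.
  apply mlim_iff_eventually_eq_upto. intros n.
  destruct (finite_positions u n Hwu) as [L HL].
  assert (HP : exists beta, P beta).
  { destruct (liminf_eventually_eq u [] Hli Htot (proj1 Hwu)) as [beta [Hb _]]. eauto. }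
  destruct (eventually_forall_in P L (fun p iota => u p <> None -> T iota p = u p) HP)
    as [beta [Hb Hbeta]].
  { intros p _. destruct (classic (u p = None)) as [E|E].
    - destruct HP as [beta Hb]. exists beta. split; [exact Hb|]. intros; contradiction.
    - destruct (liminf_eventually_eq u p Hli Htot E) as [beta [Hb H]].
      exists beta. split; [exact Hb|]. intros iota Hi Hle _. apply H; assumption. }
  exists beta. split; [exact Hb|]. intros iota Hi Hle.
  apply wf_eq_upto; [apply T_wf; exact Hi|exact Hwu|]. intros q Hq Hu.
  exact (Hbeta iota Hi Hle q (HL q Hq Hu) Hu).
Qed.

Lemma mlim_wf u : is_mlim P T u -> wf ar u.
Proof.
  intros Hm. rewrite mlim_iff_eventually_eq_upto in Hm. split.
  - destruct (Hm 0%nat) as [beta [Hb H]].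
    rewrite <- (H beta Hb (ole_refl beta) [] (le_n _)). apply T_wf, Hb.
  - intros p i. destruct (Hm (S (length p))) as [beta [Hb H]].
    rewrite <- (H beta Hb (ole_refl beta) (p ++ [i])) by (rewrite length_app; simpl; lia).
    rewrite <- (H beta Hb (ole_refl beta) p) by lia.
    apply T_wf, Hb.
Qed.

Lemma mlim_liminf u : is_mlim P T u -> is_liminf ar P T u.
Proof.
  intros Hm. pose proof (mlim_wf u Hm) as Hwu. rewrite mlim_iff_eventually_eq_upto in Hm.
  split; [exact Hwu|split].
  - intros g [beta [Hb [_ [Hlow _]]]] q Hq.
    destruct (eventually_beyond P beta _ Hb (Hm (length q))) as [iota [Hi [Hle Heq]]].
    rewrite <- (Heq q (le_n _)).
    exact (Hlow (T iota) (tail_at beta iota Hi Hle) q Hq).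
  - intros h Hh Hup p Hp. destruct (Hm (length p)) as [beta [Hb Hbeta]].
    assert (Hagree : forall q, (length q <= length p)%nat -> agree (tail beta) q).
    { intros q Hq a c [i1 [Hi1 [Hl1 ->]]] [i2 [Hi2 [Hl2 ->]]].
      rewrite (Hbeta i1 Hi1 Hl1 q Hq), (Hbeta i2 Hi2 Hl2 q Hq). reflexivity. }
    pose proof (tail_at beta beta Hb (ole_refl beta)) as Htail.
    assert (Hg : is_glb ar (tail beta) (glb_of (tail beta) (T beta))).
    { apply glb_of_is_glb; [exact Htail|]. intros a [iota [Hi [_ ->]]]. apply T_wf, Hi. }
    assert (Egp : glb_of (tail beta) (T beta) p = u p).
    { rewrite glb_of_agree; [exact (Hbeta beta Hb (ole_refl _) p (le_n _))| |apply Hagree; lia].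
      intros q i r ->. apply Hagree. rewrite length_app. simpl. lia. }
    rewrite <- Egp in Hp |- *.
    exact (Hup _ (ex_intro _ beta (conj Hb Hg)) p Hp).
Qed.

End Limits.

Section Reductions.
Context {W : wordinal}.
Variables (alpha : W) (T : W -> term F V).
Hypothesis T_wf : forall iota, below_hat alpha iota -> wf ar (T iota).

Lemma wf_before_limit l : olt l alpha -> forall iota, olt iota l -> wf ar (T iota).
Proof. intros Hl iota Hi. apply T_wf. left. exact (olt_trans _ _ _ _ Hi Hl). Qed.

Lemma p_continuous_total_iff_m_continuous :
  weakly_p_continuous ar alpha T /\ red_total alpha T <-> weakly_m_continuous alpha T.
Proof.
  split.
  - intros [Hpc Htot]. split; [exact Htot|]. intros l Hl Hlim.
    apply liminf_mlim; [exact (wf_before_limit l Hl)|exact (Hpc l Hl Hlim)|].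
    apply Htot. left. exact Hl.
  - intros [Htot Hmc]. split; [|exact Htot]. intros l Hl Hlim.
    exact (mlim_liminf _ _ (wf_before_limit l Hl) _ (Hmc l Hl Hlim)).
Qed.

Lemma p_converges_total_iff_m_converges t :
  weakly_p_converges ar alpha T t /\ red_total alpha T /\ total t <->
  weakly_m_converges alpha T t.
Proof.
  split.
  - intros [[Hpc Hli] [Htot Ht]].
    split; [apply p_continuous_total_iff_m_continuous; split; assumption|].
    split; [exact Ht|exact (liminf_mlim _ _ T_wf _ Hli Ht)].
  - intros [Hmc [Ht Hm]].
    destruct (proj2 p_continuous_total_iff_m_continuous Hmc) as [Hpc Htot].
    split; [split; [exact Hpc|exact (mlim_liminf _ _ T_wf _ Hm)]|split; assumption].
Qed.

End Reductions.
End Terms.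

Theorem theorem4p9 :
  forall (F V : Type) (ar : F -> nat) (Rules : term F V * term F V -> Prop),
    is_trs ar Rules ->
  forall (W : wordinal) (alpha : W) (T : W -> term F V) (pos : W -> list nat)
         (s : term F V),
    is_reduction ar Rules alpha T pos -> starts_in T s ->
    ((weakly_p_continuous ar alpha T /\ red_total alpha T)
        <-> weakly_m_continuous alpha T) /\
    (forall t : term F V,
        (weakly_p_converges ar alpha T t /\ red_total alpha T /\ total t)
        <-> weakly_m_converges alpha T t).
Proof.
  intros F V ar Rules _ W alpha T pos s [T_wf _] _. split.
  - exact (p_continuous_total_iff_m_continuous F V ar alpha T T_wf).
  - intros t. exact (p_converges_total_iff_m_converges F V ar alpha T T_wf t).
Qed.
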